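(* Let $n\ge 3$ and let $S$ be a double-$n$ string with diameter $d<n/2$, whose symbols are labeled $1,\dots,n$ in the order of their first occurrence in $S$. For $1\le i\le d+1$, let $r_i$ be the number of symbols $j\neq i$ such that each of the two occurrences of $j$ lies at position-distance at most $d$ from some occurrence of $i$. Then $r_i \le 3d+i-n$.
   Context: A double-$n$ string is a string of length $2n$ over an alphabet of $n$ symbols in which each symbol appears exactly twice. Positions in the string are numbered $1,\dots,2n$; the position-distance between two entries is the absolute difference of their positions. The distance between two distinct symbols is the minimum position-distance between an occurrence of the first and an occurrence of the second. The diameter of a double-$n$ string is the maximum of the distance over all pairs of distinct symbols. *)

From mathcomp Require Import all_boot.
Set Implicit Arguments. Unset Strict Implicit. Unset Printing Implicit Defensive.

(* A string of length 2n over symbols 'I_n; positions are 0-indexed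
   (0..2n-1), which does not affect position-distances. *)
Definition dstring (n : nat) := 'I_(2 * n) -> 'I_n.

Definition posdist (p q : nat) : nat := (p - q) + (q - p).

Definition is_double (n : nat) (s : dstring n) : Prop :=
  forall a : 'I_n, #|[pred p | s p == a]| = 2.

Definition sdist (n : nat) (s : dstring n) (a b : 'I_n) : nat :=
  \big[minn/(2 * n)]_(p | s p == a) \big[minn/(2 * n)]_(q | s q == b)
     posdist p q.

Definition diameter (n : nat) (s : dstring n) : nat :=
  \max_(a : 'I_n) \max_(b : 'I_n | b != a) sdist s a b.

Definition first_occ_labelled (n : nat) (s : dstring n) : Prop :=
  forall (a b : 'I_n), a < b ->
    forall q : 'I_(2 * n), s q == b -> exists p : 'I_(2 * n), p < q /\ s p == a.

Definition rcount (n : nat) (s : dstring n) (d : nat) (i : 'I_n) : nat :=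
  #|[pred j : 'I_n | (j != i) &&
      [forall q, (s q == j) ==> [exists p, (s p == i) && (posdist p q <= d)]]]|.

From mathcomp Require Import all_boot zify.
Set Implicit Arguments. Unset Strict Implicit. Unset Printing Implicit Defensive.

(* Proof idea (positions are 0-indexed, symbols 'I_n are labelled 0..n-1).
   1. Since 2d < n, no symbol repeats among the positions 0..d: if it did,
      positions 0..2d would show at most 2d symbols, so some symbol b only
      occurs after position 2d and is farther than d from the repeated one.
   2. Hence the first d+1 positions carry d+1 distinct symbols, and by the
      first-occurrence labelling position k carries symbol k for k <= d.
   3. Let a be a symbol occurring at p1 and p2, and let near a be the set of
      positions not carrying a but within distance d of an occurrence of a.
      Counting positions, #|near a| + 2 is at most the total length of the two
      windows [p1-d, p1+d] and [p2-d, p2+d].  Counting by symbols, every j <> a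
      has an occurrence in near a (its distance to a is at most d) and the j
      counted by r_a have both occurrences there, so n - 1 + r_a <= #|near a|.
   For a = i we have p1 = i <= d by step 2, so the first window is [0, i+d],
   and the two counts give r_i + n <= 3d + i + 1. *)

Lemma card_interval m (A : pred 'I_m) lo hi :
  (forall x, A x -> lo <= x <= hi) -> #|A| <= hi.+1 - lo.
Proof.
move=> Ain; rewrite cardE -(size_map val) -(size_iota lo (hi.+1 - lo)).
apply: uniq_leq_size; first by rewrite map_inj_uniq ?enum_uniq //; exact: val_inj.
move=> y /mapP [x]; rewrite mem_enum mem_iota => /Ain /andP [lo_x x_hi] ->.
by rewrite -[\val x]/(nat_of_ord x) lo_x /=; lia.
Qed.

Lemma sum_indicator m (P : pred 'I_m) : \sum_(j : 'I_m) (P j : nat) = #|P|.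
Proof.
rewrite -sum1_card [RHS]big_mkcond; apply: eq_bigr => j _.
by rewrite unfold_in; case: (P j).
Qed.

Lemma card_fibres m k (f : 'I_m -> 'I_k) (A : pred 'I_m) :
  #|A| = \sum_(j : 'I_k) #|[pred x | A x && (f x == j)]|.
Proof.
rewrite -sum1_card (partition_big f xpredT) //=.
by apply: eq_bigr => j _; rewrite -sum1_card; apply: eq_bigl => x; rewrite !inE.
Qed.

Definition near n (s : dstring n) (d : nat) (a : 'I_n) : pred 'I_(2 * n) :=
  [pred q | (s q != a) && [exists p, (s p == a) && (posdist p q <= d)]].

Definition reach n (s : dstring n) (d : nat) (a : 'I_n) : pred 'I_n :=
  [pred j | (j != a) &&
     [forall q, (s q == j) ==> [exists p, (s p == a) && (posdist p q <= d)]]].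

Lemma rcountE n (s : dstring n) d a : rcount s d a = #|reach s d a|.
Proof. by []. Qed.

Section DoubleString.

Variables (n : nat) (s : dstring n).

Lemma sdist_le_diameter a b : b != a -> sdist s a b <= diameter s.
Proof.
move=> ba; apply: leq_trans (leq_bigmax_cond a isT).
exact: (@leq_bigmax_cond _ (fun b => b != a) (fun b => sdist s a b) b ba).
Qed.

(* A distance bound below the default value 2n is realised by two
   occurrences. *)
Lemma sdist_witness a b d : d < 2 * n -> sdist s a b <= d ->
  exists p q, [/\ s p = a, s q = b & posdist p q <= d].
Proof.
move=> dn; rewrite leqNgt.
case: [exists p, exists q, [&& s p == a, s q == b & posdist p q <= d]] / existsP.
  by move=> [p /existsP [q /and3P [/eqP sp /eqP sq pq]]] _; exists p, q.
move=> Hfar /negP []; have gt_d x y : d < x -> d < y -> d < minn x y.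
  by rewrite leq_min => -> ->.
apply: (big_ind (fun x => d < x)) => // p sp.
apply: (big_ind (fun x => d < x)) => // q sq.
rewrite ltnNge; apply/negP => pq; apply: Hfar; exists p.
by apply/existsP; exists q; rewrite sp sq pq.
Qed.

Hypothesis double : is_double s.
Variable d : nat.

Lemma occurrence_pair a p q r : s p = a -> s q = a -> p != q -> s r = a ->
  r = p \/ r = q.
Proof.
move=> sp sq pq sr; case: (eqVneq r p) => [|rp]; first by left.
case: (eqVneq r q) => [|rq]; first by right.
have := double a; rewrite (cardD1 p) (cardD1 q) (cardD1 r) !inE sp sq sr eqxx.
by rewrite eq_sym pq rp rq.
Qed.

Lemma other_occurrence a p : s p = a -> exists2 p', p' != p & s p' = a.
Proof.
move=> sp; have := double a; rewrite (cardD1 p) inE sp eqxx add1n => -[card1].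
have : 0 < #|[predD1 [pred x | s x == a] & p]| by rewrite card1.
by case/card_gt0P => p'; rewrite !inE => /andP [p'p /eqP sp']; exists p'.
Qed.

(* Step 3 of the plan, counting positions: near a lies in the windows of
   radius d around the two occurrences p1, p2 of a, and misses p1 and p2. *)
Lemma near_upper a p1 p2 : s p1 = a -> s p2 = a -> p1 != p2 ->
  #|near s d a| + 2 <= (p1 + d).+1 - (p1 - d) + ((p2 + d).+1 - (p2 - d)).
Proof.
move=> sp1 sp2 p12.
pose window (c : 'I_(2 * n)) := [pred x : 'I_(2 * n) | c - d <= x <= c + d].
have card_window c : #|window c| <= (c + d).+1 - (c - d).
  by apply: card_interval => x.
have cover : {subset [predU1 p1 & [predU1 p2 & near s d a]]
                <= [predU window p1 & window p2]}.
  move=> x; rewrite !inE => /or3P [/eqP -> | /eqP -> | /andP [_]].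
  - by apply/orP; left; apply/andP; split; lia.
  - by apply/orP; right; apply/andP; split; lia.
  case/existsP=> p /andP [/eqP sp]; rewrite /posdist.
  by case: (occurrence_pair sp1 sp2 p12 sp) => -> ?; apply/orP; [left|right];
    apply/andP; split; lia.
have := subset_leq_card (introT subsetP cover).
have := cardUI (window p1) (window p2).
rewrite !cardU1 !inE sp1 sp2 eqxx orbF (negbTE p12) /=.
move=> UI near_le; rewrite addnC; apply: leq_trans near_le _.
apply: leq_trans (leq_addr #|[predI window p1 & window p2]| _) _.
by rewrite UI; apply: leq_add; apply: card_window.
Qed.

Hypotheses (diam : diameter s = d) (small : 2 * d < n).

Lemma close_occurrences a b : b != a ->
  exists p q, [/\ s p = a, s q = b & posdist p q <= d].
Proof.
move=> ba; apply: sdist_witness; first by lia.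
by rewrite -diam; apply: sdist_le_diameter.
Qed.

(* Step 1 of the plan: the positions 0..d carry pairwise distinct symbols.
   Otherwise positions 0..2d show at most 2d < n symbols, and a symbol
   occurring only after position 2d is farther than d from the repeated one. *)
Lemma prefix_injective (p q : 'I_(2 * n)) :
  p <= d -> q <= d -> s p = s q -> p = q.
Proof.
move=> pd qd spq; apply/eqP/contraT => pq.
pose early := [predD1 [pred x : 'I_(2 * n) | x <= 2 * d] & q].
have early_p : p \in early by rewrite !inE pq /=; lia.
have card_early : #|early| <= 2 * d.
  have := @card_interval _ [pred x : 'I_(2 * n) | x <= 2 * d] 0 (2 * d)
    (fun x x_le => x_le).
  by rewrite (cardD1 q) inE (_ : q <= 2 * d) ?subn0 //; lia.
have /subsetPn [b _ b_new] : ~~ ([set: 'I_n] \subset s @: early).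
  apply/negP => /subset_leq_card; rewrite cardsT card_ord.
  by move/leq_trans/(_ (leq_trans (leq_imset_card s early) card_early)); lia.
have b_late x : s x = b -> 2 * d < x.
  move=> sx; rewrite ltnNge; apply/negP => x_le; move: b_new; rewrite -sx.
  case: (eqVneq x q) => [-> | xq]; first by rewrite -spq imset_f.
  by rewrite imset_f // !inE xq.
have b_sp : b != s p by apply: contraNneq b_new => ->; rewrite imset_f.
have [p' [q' [sp' sq' p'q']]] := close_occurrences b_sp.
have := b_late q' sq'; move: p'q'; rewrite /posdist.
by case: (occurrence_pair (erefl (s p)) (esym spq) pq sp') => ->; lia.
Qed.

Hypothesis labelled : first_occ_labelled s.

(* By
   strong induction: a smaller label would repeat an earlier symbol, contradicting
   injectivity; a larger label s k > k would force the first occurrence of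
   label k to precede position k, where all labels are already smaller. *)
Lemma prefix_label (k : 'I_(2 * n)) : k <= d -> s k = k :> nat.
Proof.
move: {2}(nat_of_ord k) (erefl (nat_of_ord k)) => m.
elim/ltn_ind: m k => m IH k km kd.
case: (ltngtP (s k) k) => [lt | gt | //].
  have sk_lt : (s k : nat) < 2 * n by have := ltn_ord (s k); lia.
  have sk_le : (s k : nat) <= d by lia.
  have IHsk := IH (s k) (ltac:(lia)) (Ordinal sk_lt) erefl sk_le.
  have /(congr1 val) /= : Ordinal sk_lt = k.
    by apply: prefix_injective => //; apply: val_inj.
  by lia.
have k_lt : (k : nat) < n by lia.
have [p [pk /eqP sp]] := labelled gt (eqxx (s k)) (a := Ordinal k_lt).
by have := IH p (ltac:(lia)) p erefl (ltac:(lia)); rewrite sp /=; lia.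
Qed.

Lemma near_fibre a j :
  (j != a) + (j \in reach s d a) <= #|[pred x | near s d a x && (s x == j)]|.
Proof.
case: (eqVneq j a) => [->|ja]; first by rewrite inE eqxx.
have [p [q [sp sq pq]]] := close_occurrences ja.
case Rj: (j \in reach s d a) => /=.
  apply: leq_trans (_ : 2 <= #|[pred x | s x == j]|) _; first by rewrite double.
  apply: subset_leq_card; apply/subsetP => x.
  rewrite !inE => /eqP sx; rewrite sx eqxx andbT /near inE sx ja /=.
  by move: Rj; rewrite inE ja => /forallP /(_ x); rewrite sx eqxx.
apply/card_gt0P; exists q; rewrite !inE sq eqxx andbT /near inE sq ja /=.
by apply/existsP; exists p; rewrite sp eqxx.
Qed.

Lemma near_lower a : n.-1 + rcount s d a <= #|near s d a|.
Proof.
have -> : n.-1 = #|predC1 a| by rewrite cardC1 card_ord.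
rewrite rcountE -(sum_indicator (predC1 a)) -(sum_indicator (reach s d a)).
rewrite -big_split (card_fibres s).
by apply: leq_sum => j _; apply: near_fibre.
Qed.

End DoubleString.

(* The main result (Lemma 3.4), with symbol k standing for the paper's k+1. *)
Theorem lemma3p4 (n : nat) (s : dstring n) (d : nat) (i : 'I_n) :
  3 <= n -> is_double s -> first_occ_labelled s ->
  diameter s = d -> 2 * d < n ->
  i < d.+1 ->
  rcount s d i + n <= 3 * d + i.+1.
Proof.
move=> _ double labelled diam small i_le.
have i_lt : (i : nat) < 2 * n by lia.
have s_p1 : s (Ordinal i_lt) = i.
  by apply: val_inj; rewrite /= (prefix_label double diam small labelled).
have [p2 p2_ne s_p2] := other_occurrence double s_p1.
have := near_upper double d s_p1 s_p2 (ltac:(by rewrite eq_sym)).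
have := near_lower double diam small i.
rewrite /=; lia.
Qed.
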